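(* Let $\mathcal{X}=\mathcal{X}^{(1)}\times\cdots\times\mathcal{X}^{(d)}$ with each $\mathcal{X}^{(i)}$ finite, $P\in\mathcal{L}(\mathcal{X})$, and $L_i\in\mathcal{L}(\mathcal{X}^{(i)})$ for $i=1,\dots,d$. 1. (Pythagorean identity) If $\pi\in\mathcal{P}(\mathcal{X})$ is positive, then $D^\pi_{KL}(P\|\otimes_{i=1}^dL_i)=D^\pi_{KL}(P\|\otimes_{i=1}^dP^{(i)}_\pi)+D^\pi_{KL}(\otimes_{i=1}^dP^{(i)}_\pi\|\otimes_{i=1}^dL_i)=D^\pi_{KL}(P\|\otimes_{i=1}^dP^{(i)}_\pi)+\sum_{i=1}^dD^{\pi^{(i)}}_{KL}(P^{(i)}_\pi\|L_i)$, where $\pi^{(i)}$ is the $i$th marginal of $\pi$. In particular $\otimes_{i=1}^dP^{(i)}_\pi$ is the unique minimizer of $(L_1,\dots,L_d)\mapsto D^\pi_{KL}(P\|\otimes_iL_i)$, and $\mathbb{I}^\pi(P)=D^\pi_{KL}(P\|\otimes_{i=1}^dP^{(i)}_\pi)$. 2. (Bisection) If $\pi=\otimes_{i=1}^d\pi^{(i)}$ is a positive product distribution and $P$ is $\pi$-stationary, then $\mathbb{I}^\pi(P)=\mathbb{I}^\pi(P^* )$.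
   Context: $\mathcal{P}(\Omega),\mathcal{L}(\Omega)$: probability masses and transition matrices on finite $\Omega$. $D_{KL}^{\pi}(M\|L):=\sum_{x,y}\pi(x)M(x,y)\ln\frac{M(x,y)}{L(x,y)}$ (value $+\infty$ if $M(x,y)>0=L(x,y)$ for some $x$ with $\pi(x)>0$; $0\ln(0/0)=0$). $(\otimes_iL_i)(x,y)=\prod_iL_i(x^i,y^i)$. $\mathbb{I}^\pi(P):=\min_{L_i\in\mathcal{L}(\mathcal{X}^{(i)})}D^\pi_{KL}(P\|\otimes_{i=1}^dL_i)$. For positive $\pi$, the $i$th marginal transition matrix is $P^{(i)}_\pi(x^i,y^i):=\frac{\sum_{x^j,y^j,\,j\ne i}\pi(x)P(x,y)}{\pi^{(i)}(x^i)}$ where the sum is over all coordinates $j\neq i$ of $x=(x^1,\dots,x^d)$ and $y=(y^1,\dots,y^d)$. For $\pi$-stationary $P$, $P^*(x,y)=\frac{\pi(y)}{\pi(x)}P(y,x)$. *)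

From HB Require Import structures.
From mathcomp Require Import all_boot all_order all_algebra.
From mathcomp Require Import all_classical all_reals all_analysis.
Set Implicit Arguments. Unset Strict Implicit. Unset Printing Implicit Defensive.
Import Order.TTheory GRing.Theory Num.Theory.
Local Open Scope ring_scope.

Notation prodspace X := {dffun forall i, X i}.

Section Defs.
Variable R : realType.

Definition prob_mass (T : finType) (p : T -> R) : Prop :=
  (forall x, 0 <= p x) /\ \sum_x p x = 1.

Definition positive (T : finType) (p : T -> R) : Prop := forall x, 0 < p x.

Definition transition (T : finType) (M : T -> T -> R) : Prop :=
  (forall x y, 0 <= M x y) /\ (forall x, \sum_y M x y = 1).

(* D^pi_KL(M || L), with value +oo if M(x,y) > 0 = L(x,y) for some x with
   pi(x) > 0, and the convention 0 ln (0/0) = 0 (terms with M(x,y)=0 vanish). *)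
Definition KL (T : finType) (pi : T -> R) (M L : T -> T -> R) : \bar R :=
  if [exists x, [exists y, [&& 0 < pi x, 0 < M x y & L x y == 0]]]
  then +oo%E
  else (\sum_x \sum_y (if M x y == 0 then 0
                        else pi x * M x y * ln (M x y / L x y)))%:E.


Definition tensor (d : nat) (X : 'I_d -> finType)
    (L : forall i, X i -> X i -> R) : prodspace X -> prodspace X -> R :=
  fun x y => \prod_(i < d) L i (x i) (y i).

Definition marginal (d : nat) (X : 'I_d -> finType) (pi : prodspace X -> R)
    (i : 'I_d) : X i -> R :=
  fun a => \sum_(x : prodspace X | x i == a) pi x.

Arguments marginal {d X} pi i.

Definition marginal_transition (d : nat) (X : 'I_d -> finType)
    (pi : prodspace X -> R) (P : prodspace X -> prodspace X -> R)
    (i : 'I_d) : X i -> X i -> R :=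
  fun a b => (\sum_(x : prodspace X | x i == a) \sum_(y : prodspace X | y i == b)
                 pi x * P x y) / marginal pi i a.

Arguments marginal_transition {d X} pi P i.

(* I^pi(P) := min over L_i in L(X^(i)) of D^pi_KL(P || tensor L)
   (rendered as the infimum; part 1 shows it is attained). *)
Definition Ipi (d : nat) (X : 'I_d -> finType) (pi : prodspace X -> R)
    (P : prodspace X -> prodspace X -> R) : \bar R :=
  ereal_inf [set KL pi P (tensor L) | L in
     [set L : forall i, X i -> X i -> R | forall i, transition (L i)]].

Definition stationary (T : finType) (pi : T -> R) (P : T -> T -> R) : Prop :=
  forall y, \sum_x pi x * P x y = pi y.

Definition reversal (T : finType) (pi : T -> R) (P : T -> T -> R) : T -> T -> R :=
  fun x y => pi y / pi x * P y x.

End Defs.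

Arguments marginal {R d X} pi i.
Arguments marginal_transition {R d X} pi P i.

(* Write Q for the tensor product of the marginal transition matrices P^(i).
   For a product kernel L, ln Q - ln (tensor L) is a sum over i of functions of
   the coordinate pair (x^i, y^i) alone, and under both pi P and pi Q each pair
   (x^i, y^i) has the law pi^(i) P^(i).  Hence the cross term
   sum pi P (ln Q - ln tensor L) equals sum pi Q (ln Q - ln tensor L), and both
   equal sum_i D(P^(i) || L_i): this is the Pythagorean identity.  Gibbs'
   inequality makes each D(P^(i) || L_i) nonnegative, vanishing only at
   L_i = P^(i), which gives the unique minimizer.  For the bisection, the
   marginal transitions of P* are the pi^(i)-reversals of the P^(i); when pi is
   a product this makes their tensor the pi-reversal of Q, and relative entropy
   is invariant under reversing both arguments. *)

From HB Require Import structures.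
From mathcomp Require Import all_boot all_order all_algebra.
From mathcomp Require Import all_classical all_reals all_analysis.
From mathcomp Require Import ring lra.
Set Implicit Arguments. Unset Strict Implicit. Unset Printing Implicit Defensive.
Import Order.TTheory GRing.Theory Num.Theory.
Local Open Scope ring_scope.

Section RelativeEntropy.
Variable R : realType.

Lemma ln_lt_subr1 (y : R) : 0 < y -> y != 1 -> ln y < y - 1.
Proof.
move=> y_gt0 y_neq1; rewrite ltrBrDl -[ltRHS](lnK y_gt0) expR_gt1Dx //.
by rewrite ln_eq0.
Qed.

Lemma gibbs_term (p q : R) : 0 <= p -> 0 <= q -> (0 < p -> 0 < q) ->
  p - q <= p * (ln p - ln q) ?= iff (p == q).
Proof.
move=> p_ge0 q_ge0 pq; apply/leifP.
have [<-|neq_pq] := eqVneq p q; first by rewrite !subrr mulr0.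
move: p_ge0; rewrite le0r => /orP[/eqP p0|p_gt0].
  rewrite p0 mul0r sub0r oppr_lt0 lt_neqAle q_ge0 andbT.
  by move: neq_pq; rewrite p0 eq_sym.
have q_gt0 := pq p_gt0.
have qp_neq1 : q / p != 1.
  by apply: contra_neq neq_pq => /divr1_eq ->.
have := ln_lt_subr1 (divr_gt0 q_gt0 p_gt0) qp_neq1.
rewrite ln_div ?posrE // => lt_ln; rewrite -(ltr_pM2l p_gt0) in lt_ln.
rewrite !mulrBr mulrCA divff ?gt_eqF // !mulr1 in lt_ln.
rewrite mulrBr; lra.
Qed.

Lemma gibbs (F : finType) (p q : F -> R) :
  (forall b, 0 <= p b) -> (forall b, 0 <= q b) -> (forall b, 0 < p b -> 0 < q b) ->
  \sum_b p b = 1 -> \sum_b q b = 1 ->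
  0 <= \sum_b p b * (ln (p b) - ln (q b)) ?= iff [forall b, p b == q b].
Proof.
move=> p_ge0 q_ge0 pq p1 q1.
have := leif_sum (fun b _ => gibbs_term (p_ge0 b) (q_ge0 b) (@pq b)).
by move=> /(_ predT); rewrite sumrB p1 q1 subrr.
Qed.

Lemma ln_prod (I : finType) (F : I -> R) : (forall i, 0 < F i) ->
  ln (\prod_i F i) = \sum_i ln (F i).
Proof.
move=> F_gt0.
suff [] : 0 < \prod_i F i /\ ln (\prod_i F i) = \sum_i ln (F i) by [].
elim/big_rec2: _ => [|i y1 y2 _ [y1_gt0 <-]]; first by rewrite ln1.
by split; [rewrite mulr_gt0 | rewrite lnM // posrE].
Qed.

Section KLFinite.
Variable F : finType.
Implicit Types (pi : F -> R) (M N : F -> F -> R).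

Definition KLsum pi M N : R :=
  \sum_x \sum_y pi x * M x y * (ln (M x y) - ln (N x y)).

Lemma KL_finE pi M N : (forall x y, 0 <= M x y) ->
  (forall x y, 0 < M x y -> 0 < N x y) -> KL pi M N = (KLsum pi M N)%:E.
Proof.
move=> M_ge0 MN; rewrite /KL ifF; last first.
  apply/negbTE/existsPn => x; apply/existsPn => y.
  by apply/negP => /and3P[_ /MN + /eqP N0]; rewrite N0 ltxx.
congr (_%:E); apply: eq_bigr => x _; apply: eq_bigr => y _.
have [->|M_neq0] := eqVneq (M x y) 0; first by rewrite mulr0 mul0r.
have M_gt0 : 0 < M x y by rewrite lt_neqAle eq_sym M_neq0 M_ge0.
by rewrite ln_div // posrE MN.
Qed.

Lemma KL_eqy pi M N x y : 0 < pi x -> 0 < M x y -> N x y = 0 ->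
  KL pi M N = +oo%E.
Proof.
move=> pi_gt0 M_gt0 N0; rewrite /KL ifT //.
by apply/existsP; exists x; apply/existsP; exists y; rewrite pi_gt0 M_gt0 N0 eqxx.
Qed.

Lemma support_cases M N : (forall x y, 0 <= N x y) ->
  (forall x y, 0 < M x y -> 0 < N x y) \/ (exists x y, 0 < M x y /\ N x y = 0).
Proof.
move=> N_ge0.
have [/existsP[x /existsP[y /andP[M_gt0 /eqP N0]]]|/existsPn none] :=
  boolP [exists x, exists y, (0 < M x y) && (N x y == 0)].
  by right; exists x, y.
left => x y M_gt0; move: (none x) => /existsPn/(_ y).
by rewrite M_gt0 /= lt_neqAle eq_sym N_ge0 andbT.
Qed.

Lemma KLsum_split pi M N N' : KLsum pi M N =
  KLsum pi M N' + \sum_x \sum_y pi x * M x y * (ln (N' x y) - ln (N x y)).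
Proof.
rewrite /KLsum -big_split; apply: eq_bigr => x _.
by rewrite -big_split; apply: eq_bigr => y _ /=; ring.
Qed.

Section Transitions.
Variables (pi : F -> R) (M N : F -> F -> R).
Hypotheses (pi_gt0 : positive pi) (M_tr : transition M) (N_tr : transition N).

Let row_gibbs x : (forall y, 0 < M x y -> 0 < N x y) ->
  0 <= \sum_y M x y * (ln (M x y) - ln (N x y)) ?= iff [forall y, M x y == N x y].
Proof. by case: M_tr N_tr => [M_ge0 M1] [N_ge0 N1] /gibbs; apply. Qed.

Let KLsum_rows : KLsum pi M N =
  \sum_x pi x * \sum_y M x y * (ln (M x y) - ln (N x y)).
Proof.
by apply: eq_bigr => x _; rewrite mulr_sumr; apply: eq_bigr => y _; rewrite mulrA.
Qed.

Lemma KL_ge0 : (0 <= KL pi M N)%E.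
Proof.
have [MN|[x [y [M_gt0 N0]]]] := support_cases M (N_tr.1); last first.
  by rewrite (KL_eqy (pi_gt0 x) M_gt0 N0) leey.
rewrite KL_finE //; last exact: M_tr.1.
rewrite KLsum_rows lee_fin sumr_ge0 // => x _.
by apply: mulr_ge0; [exact: ltW | exact: (row_gibbs (MN x)).1].
Qed.

Lemma KL_eq0 : KL pi M N = 0%E -> forall x y, M x y = N x y.
Proof.
have [MN|[x [y [M_gt0 N0]]]] := support_cases M (N_tr.1); last first.
  by rewrite (KL_eqy (pi_gt0 x) M_gt0 N0).
rewrite KL_finE //; last exact: M_tr.1.
move=> [] /eqP; rewrite KLsum_rows psumr_eq0 => [/allP rows0 x y|x _]; last first.
  by apply: mulr_ge0; [exact: ltW | exact: (row_gibbs (MN x)).1].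
have := rows0 x (mem_index_enum x); rewrite mulf_eq0 gt_eqF //= eq_sym.
by rewrite (row_gibbs (MN x)).2 => /forallP/(_ y)/eqP.
Qed.

End Transitions.
End KLFinite.

Section Reversal.
Variables (F : finType) (pi : F -> R).
Hypothesis pi_gt0 : positive pi.

Lemma transition_reversal P : transition P -> stationary pi P ->
  transition (reversal pi P).
Proof.
move=> [P_ge0 P1] P_stat; split=> [x y|x].
  by rewrite mulr_ge0 // divr_ge0 // ltW.
under eq_bigr => y _ do rewrite /reversal mulrAC.
by rewrite -mulr_suml P_stat divff // gt_eqF.
Qed.

Let reversal_eq0 M x y : (reversal pi M x y == 0) = (M y x == 0).
Proof.
by rewrite /reversal !mulf_eq0 invr_eq0 (gt_eqF (pi_gt0 x)) (gt_eqF (pi_gt0 y)).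
Qed.

Let reversal_gt0 M x y : (0 < reversal pi M x y) = (0 < M y x).
Proof. by rewrite /reversal pmulr_rgt0 // divr_gt0. Qed.

Lemma KL_reversal M N : KL pi (reversal pi M) (reversal pi N) = KL pi M N.
Proof.
rewrite /KL; congr (if _ then _ else _%:E).
  apply/existsP/existsP => -[x /existsP[y /and3P[_]]].
    rewrite reversal_gt0 reversal_eq0 => M_gt0 N0.
    by exists y; apply/existsP; exists x; rewrite pi_gt0 M_gt0.
  move=> M_gt0 N0; exists y; apply/existsP; exists x.
  by rewrite pi_gt0 reversal_gt0 reversal_eq0 M_gt0.
rewrite exchange_big; apply: eq_bigr => y _; apply: eq_bigr => x _.
rewrite reversal_eq0; case: eqP => // _.
rewrite /reversal -mulf_div divff ?mul1r ?mulf_neq0 ?invr_eq0 ?gt_eqF //.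
by rewrite mulrA mulrCA divff ?mulr1 // gt_eqF.
Qed.

End Reversal.

End RelativeEntropy.

Section ProductSpace.
Variables (R : realType) (d : nat) (X : 'I_d -> finType).
Local Notation T := (prodspace X).

Lemma sum_dffun_prod (f : forall i, X i -> R) :
  \sum_(y : T) \prod_i f i (y i) = \prod_i \sum_(c : X i) f i c.
Proof.
rewrite (reindex (@dffun_of_fprod _ X)); last exact/onW_bij/dffun_of_fprod_bij.
pose F i := [ffun c : X i => f i c].
transitivity (\sum_(t : fprod X) \prod_(i in 'I_d) F i (t i)).
  by apply: eq_bigr => t _; apply: eq_bigr => i _; rewrite !ffunE.
rewrite big_fprod.
transitivity (\prod_i \sum_(t in tagged_with X i) untag 0 (F i) t).
  by rewrite bigA_distr_big_dep.
apply: eq_bigr => i _.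
by rewrite -(big_tag F i); apply: eq_bigr => c _; rewrite ffunE.
Qed.

Lemma sum_coord_fibers i (F : T -> R) :
  \sum_(y : T) F y = \sum_(b : X i) \sum_(y : T | y i == b) F y.
Proof. exact: (partition_big (fun y : T => y i) predT). Qed.

Lemma dffun_coord_exists (x0 : T) i (a : X i) : exists x : T, x i = a.
Proof.
exists [ffun j => @dfwith _ X (fun j => x0 j) i a j].
by rewrite ffunE; exact: dfwith_in.
Qed.

Lemma sum_prod_fiber (f : forall i, X i -> R) i (b : X i) :
  (forall j, j != i -> \sum_c f j c = 1) ->
  \sum_(y : T | y i == b) \prod_j f j (y j) = f i b.
Proof.
move=> f1.
(* [Tagged X c == Tagged X b] compares [c : X j] with [b : X i] across the family. *)
pose g j (c : X j) := if j == i then (Tagged X c == Tagged X b)%:R * f j c else f j c.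
transitivity (\sum_(y : T) \prod_j g j (y j)).
  rewrite [RHS](bigID (fun y : T => y i == b)) /= [X in _ + X]big1 ?addr0.
    apply: eq_bigr => y /eqP yb; apply: eq_bigr => j _; rewrite /g.
    by case: eqP => // ji; subst j; rewrite yb eqxx mul1r.
  move=> y yb; rewrite (bigD1 i) //= /g eqxx.
  rewrite (_ : (Tagged X (y i) == Tagged X b) = false) ?mul0r //.
  by apply/negbTE; rewrite eq_Tagged.
rewrite sum_dffun_prod (bigD1 i) //= [X in _ * X]big1 => [|j ji]; last first.
  by rewrite /g (negbTE ji); apply: f1.
rewrite mulr1 (bigD1 b) //= /g eqxx eqxx mul1r big1 ?addr0 // => c cb.
by rewrite eq_Tagged (negbTE cb) mul0r.
Qed.

Lemma tensor_ge0 (L : forall i, X i -> X i -> R) (x y : T) :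
  (forall i a b, 0 <= L i a b) -> 0 <= tensor L x y.
Proof. by move=> L_ge0; apply: prodr_ge0 => i _; apply: L_ge0. Qed.

Lemma tensor_gt0 (L : forall i, X i -> X i -> R) (x y : T) :
  (forall i, 0 < L i (x i) (y i)) -> 0 < tensor L x y.
Proof. by move=> L_gt0; apply: prodr_gt0 => i _; apply: L_gt0. Qed.

Lemma tensor_gt0_factor (L : forall i, X i -> X i -> R) (x y : T) i :
  (forall i a b, 0 <= L i a b) -> 0 < tensor L x y -> 0 < L i (x i) (y i).
Proof.
move=> L_ge0 L_gt0; rewrite lt_neqAle L_ge0 andbT eq_sym.
apply: contraTneq L_gt0 => L0.
by rewrite /tensor (bigD1 i) //= L0 mul0r ltxx.
Qed.

Lemma ln_tensor (L : forall i, X i -> X i -> R) (x y : T) :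
  (forall i a b, 0 <= L i a b) -> 0 < tensor L x y ->
  ln (tensor L x y) = \sum_i ln (L i (x i) (y i)).
Proof.
by move=> L_ge0 L_gt0; rewrite ln_prod // => i; apply: tensor_gt0_factor.
Qed.

Lemma sum_tensor_fiber (L : forall i, X i -> X i -> R) (x : T) i b :
  (forall j, transition (L j)) -> \sum_(y : T | y i == b) tensor L x y = L i (x i) b.
Proof.
move=> L_tr; rewrite /tensor (sum_prod_fiber (f := fun j c => L j (x j) c)) // => j _.
by case: (L_tr j).
Qed.

Lemma tensor_reversal (mu : forall i, X i -> R) (pi : T -> R)
    (L : forall i, X i -> X i -> R) (x y : T) :
  (forall x, pi x = \prod_i mu i (x i)) ->
  tensor (fun i => reversal (mu i) (L i)) x y = reversal pi (tensor L) x y.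
Proof.
by move=> pi_prod; rewrite /tensor /reversal !big_split /= prodfV -!pi_prod.
Qed.

End ProductSpace.

Section Marginals.
Variables (R : realType) (d : nat) (X : 'I_d -> finType).
Local Notation T := (prodspace X).
Variables (pi : T -> R) (P : T -> T -> R).
Hypotheses (pi_pm : prob_mass pi) (pi_gt0 : positive pi) (P_tr : transition P).
Local Notation m := (marginal pi).
Local Notation Pm := (marginal_transition pi P).

Let P_ge0 : forall x y, 0 <= P x y. Proof. exact: P_tr.1. Qed.

Lemma marginal_gt0 i a : 0 < m i a.
Proof.
have [x0 _|T0] := pickP (@predT T); last first.
  by move: pi_pm.2; rewrite big_pred0 // => /esym/eqP; rewrite oner_eq0.
have [x xa] := dffun_coord_exists x0 a.
rewrite /marginal (bigD1 x) ?xa //= ltr_pwDl // sumr_ge0 // => y _.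
exact: ltW.
Qed.

Lemma mul_marginal_transition i a b :
  m i a * Pm i a b = \sum_(x : T | x i == a) \sum_(y : T | y i == b) pi x * P x y.
Proof. by rewrite /marginal_transition mulrC divfK // gt_eqF // marginal_gt0. Qed.

Lemma marginal_transition_ge0 i a b : 0 <= Pm i a b.
Proof.
apply: divr_ge0; last exact/ltW/marginal_gt0.
apply: sumr_ge0 => x _; apply: sumr_ge0 => y _.
exact: mulr_ge0 (ltW (pi_gt0 x)) (P_ge0 x y).
Qed.

Lemma transition_marginal_transition i : transition (Pm i).
Proof.
split=> [|a]; first exact: marginal_transition_ge0.
rewrite /marginal_transition -mulr_suml exchange_big /=.
rewrite (eq_bigr (fun x => pi x)) ?divff ?gt_eqF ?marginal_gt0 // => x _.
by rewrite -sum_coord_fibers -mulr_sumr P_tr.2 mulr1.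
Qed.

Lemma marginal_transition_gt0 x y i : 0 < P x y -> 0 < Pm i (x i) (y i).
Proof.
move=> P_gt0; rewrite -(pmulr_rgt0 _ (marginal_gt0 (x i))) mul_marginal_transition.
have piP_ge0 u v : 0 <= pi u * P u v := mulr_ge0 (ltW (pi_gt0 u)) (P_ge0 u v).
rewrite (bigD1 x) //= (bigD1 y) //= -addrA ltr_pwDl ?mulr_gt0 //.
by apply: addr_ge0; do ?[apply: sumr_ge0 => *]; apply: piP_ge0.
Qed.

Lemma marginal_transition_eq0 i a b :
  (forall x y : T, x i = a -> y i = b -> P x y = 0) -> Pm i a b = 0.
Proof.
move=> P0; rewrite /marginal_transition big1 ?mul0r // => x /eqP xa.
by rewrite big1 // => y /eqP yb; rewrite P0 ?mulr0.
Qed.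

Lemma sum_coord_transition i (G : X i -> X i -> R) :
  \sum_(x : T) \sum_(y : T) pi x * P x y * G (x i) (y i) =
  \sum_a \sum_b m i a * Pm i a b * G a b.
Proof.
rewrite (sum_coord_fibers i); apply: eq_bigr => a _.
under eq_bigr => x _ do rewrite (sum_coord_fibers i).
rewrite exchange_big /=; apply: eq_bigr => b _.
rewrite mul_marginal_transition mulr_suml; apply: eq_bigr => x /eqP xa.
by rewrite mulr_suml; apply: eq_bigr => y /eqP yb; rewrite xa yb.
Qed.

Lemma sum_coord_tensor i (G : X i -> X i -> R) :
  \sum_(x : T) \sum_(y : T) pi x * tensor Pm x y * G (x i) (y i) =
  \sum_a \sum_b m i a * Pm i a b * G a b.
Proof.
transitivity (\sum_(x : T) pi x * \sum_b Pm i (x i) b * G (x i) b).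
  apply: eq_bigr => x _; rewrite (sum_coord_fibers i) mulr_sumr.
  apply: eq_bigr => b _; rewrite -(sum_tensor_fiber x b transition_marginal_transition).
  by rewrite !mulr_suml mulr_sumr; apply: eq_bigr => y /eqP yb; rewrite yb mulrA.
rewrite (sum_coord_fibers i); apply: eq_bigr => a _.
rewrite (eq_bigr (fun x => pi x * \sum_b Pm i a b * G a b)) => [|x /eqP -> //].
by rewrite -mulr_suml mulr_sumr; apply: eq_bigr => b _; rewrite mulrA.
Qed.

Lemma marginal_transition_reversal i a b :
  marginal_transition pi (reversal pi P) i a b = reversal (m i) (Pm i) a b.
Proof.
rewrite {1}/marginal_transition.
rewrite (eq_bigr (fun x => \sum_(y : T | y i == b) pi y * P y x)) => [|x _]; last first.
  by apply: eq_bigr => y _; rewrite /reversal mulrCA mulrA divfK // gt_eqF.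
by rewrite exchange_big /= -mul_marginal_transition /reversal mulrAC.
Qed.

Lemma tensor_marginal_transition_gt0 x y : 0 < P x y -> 0 < tensor Pm x y.
Proof. by move=> P_gt0; apply: tensor_gt0 => i; apply: marginal_transition_gt0. Qed.

Lemma KL_tensor_marginal_transitionE :
  KL pi P (tensor Pm) = (KLsum pi P (tensor Pm))%:E.
Proof. exact: KL_finE P_ge0 tensor_marginal_transition_gt0. Qed.

Section Pythagoras.
Variable L : forall i, X i -> X i -> R.
Arguments L : clear implicits.
Hypothesis L_tr : forall i, transition (L i).

Let L_ge0 : forall i a b, 0 <= L i a b. Proof. by move=> i; case: (L_tr i). Qed.

Lemma KL_marginal_ge0 i : (0 <= KL (m i) (Pm i) (L i))%E.
Proof.
exact: KL_ge0 (fun a => marginal_gt0 a) (transition_marginal_transition i) (L_tr i).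
Qed.

Lemma pythagoras_eqy x y : 0 < P x y -> tensor L x y = 0 ->
  KL pi P (tensor L) = (KL pi P (tensor Pm) + KL pi (tensor Pm) (tensor L))%E /\
  KL pi P (tensor L) = (KL pi P (tensor Pm) + \sum_i KL (m i) (Pm i) (L i))%E.
Proof.
move=> P_gt0 L0.
have [i _ /eqP Li0] : exists2 i, true & L i (x i) (y i) == 0.
  by apply/prodf_eq0; rewrite -/(tensor L x y) L0.
have KLi_eqy : KL (m i) (Pm i) (L i) = +oo%E.
  exact: KL_eqy (marginal_gt0 (x i)) (marginal_transition_gt0 i P_gt0) Li0.
have sum_eqy : (\sum_j KL (m j) (Pm j) (L j) = +oo)%E.
  apply/eqP; rewrite esum_eqy => [|j _].
    by apply/existsP; exists i; rewrite KLi_eqy.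
  by rewrite gt_eqF // (lt_le_trans _ (KL_marginal_ge0 j)) // ltNyr.
rewrite KL_tensor_marginal_transitionE sum_eqy (KL_eqy (pi_gt0 x) P_gt0 L0).
by rewrite (KL_eqy (pi_gt0 x) (tensor_marginal_transition_gt0 P_gt0) L0).
Qed.

Section Support.
Hypothesis L_supp : forall x y, 0 < P x y -> 0 < tensor L x y.

Lemma marginal_transition_support i a b : 0 < Pm i a b -> 0 < L i a b.
Proof.
apply: contraTT; rewrite -!leNgt => L_le0.
rewrite marginal_transition_eq0 // => x y xa yb.
apply/eqP; rewrite eq_le P_ge0 andbT leNgt.
apply/negP => /L_supp/(tensor_gt0_factor i L_ge0).
by rewrite xa yb ltNge L_le0.
Qed.

Lemma tensor_marginal_transition_support x y :
  0 < tensor Pm x y -> 0 < tensor L x y.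
Proof.
move=> Q_gt0; apply: tensor_gt0 => i; apply: marginal_transition_support.
exact: tensor_gt0_factor i marginal_transition_ge0 Q_gt0.
Qed.

Lemma sum_ln_tensor_ratio (M : T -> T -> R) :
  (forall x y, 0 <= M x y) -> (forall x y, 0 < M x y -> 0 < tensor Pm x y) ->
  (forall i (G : X i -> X i -> R),
     \sum_(x : T) \sum_(y : T) pi x * M x y * G (x i) (y i) =
     \sum_a \sum_b m i a * Pm i a b * G a b) ->
  \sum_x \sum_y pi x * M x y * (ln (tensor Pm x y) - ln (tensor L x y)) =
  \sum_i KLsum (m i) (Pm i) (L i).
Proof.
move=> M_ge0 M_supp M_coord.
transitivity (\sum_(x : T) \sum_(y : T) \sum_i
    pi x * M x y * (ln (Pm i (x i) (y i)) - ln (L i (x i) (y i)))).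
  apply: eq_bigr => x _; apply: eq_bigr => y _; rewrite -mulr_sumr.
  have [->|M_neq0] := eqVneq (M x y) 0; first by rewrite mulr0 !mul0r.
  have Q_gt0 : 0 < tensor Pm x y.
    by apply: M_supp; rewrite lt_neqAle eq_sym M_neq0 M_ge0.
  rewrite !ln_tensor // -?sumrB //; first exact: tensor_marginal_transition_support.
  exact: marginal_transition_ge0.
under eq_bigr => x _ do rewrite exchange_big.
by rewrite exchange_big; apply: eq_bigr => i _; apply: M_coord.
Qed.

Lemma pythagoras_finite :
  KL pi P (tensor L) = (KL pi P (tensor Pm) + KL pi (tensor Pm) (tensor L))%E /\
  KL pi P (tensor L) = (KL pi P (tensor Pm) + \sum_i KL (m i) (Pm i) (L i))%E.
Proof.
have Q_ge0 x y : 0 <= tensor Pm x y by apply: tensor_ge0 marginal_transition_ge0.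
have KLiE : (\sum_i KL (m i) (Pm i) (L i) = (\sum_i KLsum (m i) (Pm i) (L i))%:E)%E.
  rewrite -sumEFin; apply: eq_bigr => i _; apply: KL_finE.
    exact: marginal_transition_ge0.
  exact: marginal_transition_support.
rewrite KL_tensor_marginal_transitionE KL_finE // KL_finE //; last first.
  exact: tensor_marginal_transition_support.
rewrite KLiE (KLsum_split _ _ _ (tensor Pm)) -!EFinD.
rewrite (sum_ln_tensor_ratio P_ge0 tensor_marginal_transition_gt0) //; last first.
  exact: sum_coord_transition.
by rewrite /KLsum (sum_ln_tensor_ratio Q_ge0) // => i G; apply: sum_coord_tensor.
Qed.
End Support.

Lemma pythagoras :
  KL pi P (tensor L) = (KL pi P (tensor Pm) + KL pi (tensor Pm) (tensor L))%E /\
  KL pi P (tensor L) = (KL pi P (tensor Pm) + \sum_i KL (m i) (Pm i) (L i))%E.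
Proof.
have [L_supp|[x [y [P_gt0 L0]]]] := support_cases P (fun x y => tensor_ge0 x y L_ge0).
  exact: pythagoras_finite.
exact: pythagoras_eqy P_gt0 L0.
Qed.

Lemma KL_tensor_min_unique :
  KL pi P (tensor L) = KL pi P (tensor Pm) -> forall i a b, L i a b = Pm i a b.
Proof.
move=> eq_min i a b.
have sum_ge0 : (0 <= \sum_j KL (m j) (Pm j) (L j))%E.
  by apply: sume_ge0 => j _; apply: KL_marginal_ge0.
have sum0 : (\sum_j KL (m j) (Pm j) (L j) = 0)%E.
  move: pythagoras.2 sum_ge0; rewrite eq_min KL_tensor_marginal_transitionE.
  case: (\sum_j _)%E => [s| |] //=.
  by rewrite -EFinD => /eqP; rewrite eqe => /eqP sum0 _; congr (_%:E); lra.
have KLi0 : KL (m i) (Pm i) (L i) = 0%E.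
  apply/eqP; rewrite eq_le KL_marginal_ge0 andbT -sum0 (bigD1 i) //= leeDl //.
  by apply: sume_ge0 => j _; apply: KL_marginal_ge0.
have Pm_tr := transition_marginal_transition i.
by rewrite (KL_eq0 (fun a => marginal_gt0 a) Pm_tr (L_tr i) KLi0).
Qed.

End Pythagoras.

Lemma Ipi_marginal_transition : Ipi pi P = KL pi P (tensor Pm).
Proof.
apply/eqP; rewrite eq_le; apply/andP; split.
  by apply: ereal_inf_lbound; exists Pm => //; apply: transition_marginal_transition.
apply: le_ereal_inf_tmp => _ [L L_tr <-].
rewrite (pythagoras L_tr).2 leeDl // sume_ge0 // => i _.
exact: KL_marginal_ge0.
Qed.

End Marginals.

Lemma Ipi_reversal (R : realType) (d : nat) (X : 'I_d -> finType)
    (pi : prodspace X -> R) (P : prodspace X -> prodspace X -> R) :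
  prob_mass pi -> positive pi -> transition P ->
  (forall x, pi x = \prod_i marginal pi i (x i)) -> stationary pi P ->
  Ipi pi P = Ipi pi (reversal pi P).
Proof.
move=> pi_pm pi_gt0 P_tr pi_prod P_stat.
have Pr_tr := transition_reversal pi_gt0 P_tr P_stat.
rewrite !Ipi_marginal_transition // -(KL_reversal pi_gt0 P).
congr KL; apply/funext => x; apply/funext => y.
rewrite -(tensor_reversal _ _ _ pi_prod).
by apply: eq_bigr => i _; rewrite marginal_transition_reversal.
Qed.

Theorem theorem2p9 (R : realType) (d : nat) (X : 'I_d -> finType)
    (P : prodspace X -> prodspace X -> R) (L : forall i, X i -> X i -> R) :
  transition P -> (forall i, transition (L i)) ->
  (* 1. Pythagorean identity, unique minimizer, value of I^pi(P) *)
  (forall pi : prodspace X -> R, prob_mass pi -> positive pi ->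
     (KL pi P (tensor L) =
        (KL pi P (tensor (marginal_transition pi P))
         + KL pi (tensor (marginal_transition pi P)) (tensor L))%E)
     /\ (KL pi P (tensor L) =
        (KL pi P (tensor (marginal_transition pi P))
         + \sum_(i < d) KL (marginal pi i) (marginal_transition pi P i) (L i))%E)
     /\ (forall i, transition (marginal_transition pi P i))
     /\ (forall L' : forall i, X i -> X i -> R, (forall i, transition (L' i)) ->
           KL pi P (tensor L') = KL pi P (tensor (marginal_transition pi P)) ->
           forall i a b, L' i a b = marginal_transition pi P i a b)
     /\ Ipi pi P = KL pi P (tensor (marginal_transition pi P))) /\
  (* 2. Bisection *)
  (forall pi : prodspace X -> R, prob_mass pi -> positive pi ->
     (forall x, pi x = \prod_(i < d) marginal pi i (x i)) ->
     stationary pi P ->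
     Ipi pi P = Ipi pi (reversal pi P)).
Proof.
move=> P_tr L_tr; split=> pi pi_pm pi_gt0; last exact: Ipi_reversal.
have [pyth_tensor pyth_marginals] := pythagoras pi_pm pi_gt0 P_tr L_tr.
split=> //; split=> //; split; first exact: transition_marginal_transition.
split; last exact: Ipi_marginal_transition.
by move=> L' L'_tr; apply: KL_tensor_min_unique.
Qed.
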